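(* Consider the 2NC-TAP instance with node set $\{r,v_1,v_2,v_3,p_1,p_2,p_3,q_1,q_2,q_3\}$, tree $T$ with edges $rv_i$, $v_ip_i$, $v_iq_i$ for $i=1,2,3$ (all of cost $0$), and six links of cost $1$: $p_1p_2,p_2p_3,p_3p_1,q_1q_2,q_2q_3,q_3q_1$. Then every feasible link set has cost at least $4$ (and there is one of cost $4$), while the vector $\hat x$ with $\hat x_\ell=\frac12$ for all six links is feasible for the partition LP $(P)$ and has cost $3$. Consequently the integrality ratio of $(P)$ for 2NC-TAP is at least $\frac43$.
   Context: An instance of 2NC-TAP consists of a simple undirected graph $G=(V,E)$, a spanning tree $T$ of $G$ with cost-$0$ edges, and nonnegative costs on the links $L(G)=E\setminus T$; a link set $F$ is feasible if $(V,T\cup F)$ is 2-node connected. Let $N(T)$ be the set of non-leaf nodes of $T$. For $u\in N(T)$, let $\Pi_u$ be the set of partitions $\mathcal P$ of $V\setminus\{u\}$ such that the vertex set of each connected component of $T-u$ is contained in a set of $\mathcal P$. A link crosses $\mathcal P\in\Pi_u$ if neither end node is $u$ and its end nodes lie in different sets of $\mathcal P$. Partition LP $(P)$: minimize $\sum_\ell\mathrm{cost}(\ell)x_\ell$ subject to $\sum_{\ell\text{ crosses }\mathcal P}x_\ell\ge|\mathcal P|-1$ for all $u\in N(T)$, $\mathcal P\in\Pi_u$, and $x\ge 0$. *)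

From HB Require Import structures.
From mathcomp Require Import all_boot all_order all_algebra.
Set Implicit Arguments. Unset Strict Implicit. Unset Printing Implicit Defensive.
Import Order.TTheory GRing.Theory Num.Theory.
Local Open Scope ring_scope.

Definition restrict (V : finType) (e : rel V) (S : {set V}) : rel V :=
  fun a b => [&& a \in S, b \in S & e a b].

Definition connected_on (V : finType) (e : rel V) (S : {set V}) : Prop :=
  forall x y, x \in S -> y \in S -> connect (restrict e S) x y.

Definition two_node_connected (V : finType) (e : rel V) : Prop :=
  [/\ (2 < #|V|)%N, connected_on e setT & forall u : V, connected_on e (setT :\ u)].

Definition link_rel (V L : finType) (ends : L -> V * V) (F : {set L}) : rel V :=
  fun a b => [exists l in F, (((ends l).1 == a) && ((ends l).2 == b))
                             || (((ends l).1 == b) && ((ends l).2 == a))].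

Definition feasible (V L : finType) (tr : rel V) (ends : L -> V * V)
  (F : {set L}) : Prop :=
  two_node_connected (fun a b => tr a b || link_rel ends F a b).

Definition link_cost (L : finType) (cost : L -> rat) (F : {set L}) : rat :=
  \sum_(l in F) cost l.

Definition nonleaf (V : finType) (tr : rel V) (u : V) : bool :=
  (1 < #|[set w | tr u w]|)%N.

Definition in_Pi (V : finType) (tr : rel V) (u : V) (P : {set {set V}}) : Prop :=
  partition P (setT :\ u) /\
  forall x, x != u ->
    exists2 B, B \in P & [set y | connect (restrict tr (setT :\ u)) x y] \subset B.

Definition crosses (V L : finType) (ends : L -> V * V) (u : V)
  (P : {set {set V}}) (l : L) : bool :=
  [&& (ends l).1 != u, (ends l).2 != u & pblock P (ends l).1 != pblock P (ends l).2].

Definition partLP_feasible (V L : finType) (tr : rel V) (ends : L -> V * V)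
  (x : L -> rat) : Prop :=
  (forall l, 0 <= x l) /\
  forall (u : V) (P : {set {set V}}), nonleaf tr u -> in_Pi tr u P ->
    (#|P|%:R - 1) <= \sum_(l | crosses ends u P l) x l.

Definition LP_cost (L : finType) (cost : L -> rat) (x : L -> rat) : rat :=
  \sum_(l : L) cost l * x l.

(* nodes: 0 = r, 1,2,3 = v_1,v_2,v_3, 4,5,6 = p_1,p_2,p_3, 7,8,9 = q_1,q_2,q_3 *)
Definition ex_tree_edges : seq (nat * nat) :=
  [:: (0,1); (0,2); (0,3); (1,4); (1,7); (2,5); (2,8); (3,6); (3,9)]%N.

Definition ex_tr : rel 'I_10 :=
  fun a b => ((val a, val b) \in ex_tree_edges) || ((val b, val a) \in ex_tree_edges).

(* links: p1p2, p2p3, p3p1, q1q2, q2q3, q3q1 *)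
Definition ex_links : seq (nat * nat) :=
  [:: (4,5); (5,6); (6,4); (7,8); (8,9); (9,7)]%N.

Definition ex_ends (l : 'I_6) : 'I_10 * 'I_10 :=
  (inord (nth (0,0)%N ex_links l).1, inord (nth (0,0)%N ex_links l).2).

Definition ex_cost (l : 'I_6) : rat := 1.

Definition ex_xhat (l : 'I_6) : rat := 1 / 2.

(* Deleting the parent v_i of a leaf p_i or q_i of T must leave that leaf
   connected, so every leaf is an end of a chosen link.  Each link covers two
   leaves of the same triangle, so covering the three leaves of each triangle
   takes two links, four in all; {p1p2, p2p3, q1q2, q2q3} achieves this.
   In (P) only r and the v_i are non-leaves, and for each of them T - u has
   three components; a partition in Pi_u only matters through how it groups
   these components, and for each of the finitely many groupings the links
   between different groups, of weight 1/2 each, weigh at least |P| - 1. *)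

From HB Require Import structures.
From mathcomp Require Import all_boot all_order all_algebra lra.
Import Order.TTheory GRing.Theory Num.Theory.

Set Implicit Arguments.
Unset Strict Implicit.
Unset Printing Implicit Defensive.

(* Reachability is computed on [nat] encodings of the vertices: evaluating
   [connect] on ordinals gets stuck on opaque proof terms. *)
Section Reach.
Variables (n : nat) (R : nat -> nat -> bool) (E : rel 'I_n).
Hypothesis R_sub : forall a b : 'I_n, R a b -> E a b.

Definition reach_step (s : seq nat) : seq nat :=
  undup (s ++ [seq b <- iota 0 n | has (R^~ b) s]).

Definition reach (k x : nat) : seq nat := iter k reach_step [:: x].

Lemma reachP k (x : 'I_n) b :
  b \in reach k x -> exists2 y : 'I_n, val y = b & connect E x y.
Proof.
elim: k b => [|k IHk] b /=; first by rewrite inE => /eqP ->; exists x.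
rewrite mem_undup mem_cat => /orP[/IHk // | ].
rewrite mem_filter mem_iota /= => /andP[/hasP[a a_reach Rab] b_lt_n].
have [y y_a xy] := IHk a a_reach.
exists (Ordinal b_lt_n) => //.
by apply: connect_trans xy (connect1 _); apply: R_sub; rewrite y_a.
Qed.

End Reach.

Lemma connected_on_reach (n : nat) (e : rel 'I_n) (S : {set 'I_n})
    (p : pred nat) (R : nat -> nat -> bool) :
  (forall a : 'I_n, (a \in S) = p a) ->
  (forall a b : 'I_n, R a b -> restrict e S a b) ->
  (forall x y : 'I_n, p x -> p y -> val y \in reach n R n x) ->
  connected_on e S.
Proof.
move=> memS R_sub reach_all x y; rewrite !memS => px py.
have [y' /val_inj -> //] := reachP R_sub (reach_all x y px py).
Qed.

Lemma exists_vertex_neq2 (V : finType) (v w : V) :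
  (2 < #|V|)%N -> exists z, [&& z != v & z != w].
Proof.
move=> V_gt2; have : ~~ ([set: V] \subset [set v; w]).
  apply: contraTN V_gt2 => /subset_leq_card; rewrite cardsT cards2 -leqNgt.
  by move/leq_trans; apply; case: (v != w).
case/subsetPn=> z _; rewrite !inE negb_or => z_vw; by exists z.
Qed.

Lemma feasible_leaf_link (V L : finType) (tr : rel V) (ends : L -> V * V)
    (F : {set L}) (v w : V) :
  feasible tr ends F -> w != v -> (forall y, tr w y -> y = v) ->
  exists2 l, l \in F & ((ends l).1 == w) || ((ends l).2 == w).
Proof.
case=> V_gt2 _ conn_minus w_v tr_w.
have [z /andP[z_v z_w]] := exists_vertex_neq2 v w V_gt2.
have := conn_minus v w z; rewrite !inE w_v z_v => /(_ isT isT) /connectP[[|y p] /=].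
  by move=> _ z_eq; move: z_w; rewrite z_eq eqxx.
case/andP=> /and3P[_ y_v /orP[/tr_w y_eq | link_wy]] _ _.
  by move: y_v; rewrite !inE y_eq eqxx.
move: link_wy; rewrite /link_rel => /existsP[l /andP[lF ends_l]]; exists l => //.
by case/orP: ends_l => /andP[/eqP-> /eqP->]; rewrite eqxx ?orbT.
Qed.

Section PartitionsOfTreeComponents.
Variables (V : finType) (tr : rel V) (u : V) (P : {set {set V}}).
Hypothesis P_Pi : in_Pi tr u P.

Lemma in_Pi_pblock_connect x y :
  x != u -> connect (restrict tr (setT :\ u)) x y -> pblock P y = pblock P x.
Proof.
case: P_Pi => /and3P[_ trivP _] comp_in_block x_u xy.
have [B BP compB] := comp_in_block x x_u.
have inB z : connect (restrict tr (setT :\ u)) x z -> z \in B.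
  by move=> xz; apply: (subsetP compB); rewrite inE.
by rewrite !(def_pblock trivP BP) ?inB.
Qed.

Lemma in_Pi_card_le (s : seq V) :
  (forall x, x != u -> exists2 y, y \in s & pblock P x = pblock P y) ->
  (#|P| <= size (undup [seq pblock P y | y <- s]))%N.
Proof.
case: P_Pi => partP _ rep_s.
have /and3P[_ trivP set0_notin_P] := partP.
have P_sub : P \subset [seq pblock P y | y <- s].
  apply/subsetP => B BP.
  have /set0Pn[x xB] : B != set0 by apply: contraNneq set0_notin_P => <-.
  have : x \in cover P by apply/bigcupP; exists B.
  rewrite (cover_partition partP) !inE andbT => x_u.
  have [y ys pb_xy] := rep_s x x_u.
  by rewrite -(def_pblock trivP BP xB) pb_xy map_f.
have /card_uniqP <- := undup_uniq [seq pblock P y | y <- s].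
by rewrite (eq_card (mem_undup _)); apply: subset_leq_card.
Qed.

End PartitionsOfTreeComponents.

Lemma size_undup_map_kernel (I T1 T2 : eqType) (f : I -> T1) (g : I -> T2)
    (s : seq I) :
  {in s &, forall i j, (f i == f j) = (g i == g j)} ->
  size (undup (map f s)) = size (undup (map g s)).
Proof.
elim: s => [//|x s IHs] kernel_eq /=.
have kernel_s : {in s &, forall i j, (f i == f j) = (g i == g j)}.
  by move=> i j i_s j_s; apply: kernel_eq; rewrite inE ?i_s ?j_s orbT.
have -> : (f x \in map f s) = (g x \in map g s).
  apply/mapP/mapP => -[y ys /eqP eq_xy]; exists y => //; apply/eqP.
    by rewrite -kernel_eq ?inE ?ys ?eqxx ?orbT.
  by rewrite kernel_eq ?inE ?ys ?eqxx ?orbT.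
by case: ifP => _ /=; rewrite IHs.
Qed.

Lemma card_ord_count (n : nat) (A : {pred 'I_n}) (p : pred nat) :
  (forall i : 'I_n, (i \in A) = p i) -> #|A| = count p (iota 0 n).
Proof.
move=> memA; rewrite -val_enum_ord count_map cardE /enum_mem size_filter.
by rewrite count_filter; apply: eq_count => i; rewrite /= memA andbT.
Qed.

Lemma ord_in_iota (n : nat) (i : 'I_n) : val i \in iota 0 n.
Proof. by rewrite mem_iota ltn_ord. Qed.

Definition tree_adj (a b : nat) : bool :=
  ((a, b) \in ex_tree_edges) || ((b, a) \in ex_tree_edges).

Lemma ex_trE (a b : 'I_10) : ex_tr a b = tree_adj a b.
Proof. by []. Qed.

Definition link_end1 (l : nat) : nat := (nth (0, 0) ex_links l).1.
Definition link_end2 (l : nat) : nat := (nth (0, 0) ex_links l).2.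

Lemma ex_ends1E (l : 'I_6) : val (ex_ends l).1 = link_end1 l.
Proof. by rewrite /= inordK //; case: l => -[|[|[|[|[|[|]]]]]]. Qed.

Lemma ex_ends2E (l : 'I_6) : val (ex_ends l).2 = link_end2 l.
Proof. by rewrite /= inordK //; case: l => -[|[|[|[|[|[|]]]]]]. Qed.

Definition ex_parent (w : nat) : nat := ((w - 4) %% 3).+1.

Lemma ex_parent_lt4 w : (ex_parent w < 4)%N.
Proof. by rewrite ltnS ltn_pmod. Qed.

Definition ex_leaves_check : bool :=
  all (fun w => all (fun y => tree_adj w y ==> (y == ex_parent w)) (iota 0 10))
    (iota 4 6).

Lemma ex_leaves_checkT : ex_leaves_check.
Proof. by vm_compute. Qed.

Lemma ex_leaf_parent (w : 'I_10) :
  (3 < w)%N -> forall y, ex_tr w y -> y = inord (ex_parent w).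
Proof.
move=> w_gt3 y wy; apply: val_inj; rewrite /= inordK; last first.
  exact: leq_trans (ex_parent_lt4 w) _.
have w_leaf : val w \in iota 4 6 by rewrite mem_iota w_gt3; apply: ltn_ord.
have y_vertex : val y \in iota 0 10 by rewrite mem_iota; apply: ltn_ord.
have /allP/(_ _ w_leaf)/allP/(_ _ y_vertex) := ex_leaves_checkT.
by rewrite -ex_trE wy => /eqP.
Qed.

Lemma ex_nonleaf_lt4 (u : 'I_10) : nonleaf ex_tr u -> (u < 4)%N.
Proof.
rewrite /nonleaf; apply: contraLR; rewrite -!leqNgt => u_gt3.
apply: (@leq_trans #|[set (inord (ex_parent u) : 'I_10)]|); last by rewrite cards1.
by apply/subset_leq_card/subsetP => y; rewrite !inE => /(ex_leaf_parent u_gt3)->.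
Qed.

Lemma ex_leaf_covered (F : {set 'I_6}) (w : nat) :
  feasible ex_tr ex_ends F -> (3 < w < 10)%N ->
  has (fun l => ((inord l : 'I_6) \in F)
              && ((link_end1 l == w) || (link_end2 l == w))) (iota 0 6).
Proof.
move=> feasF /andP[w_gt3 w_lt10].
have parent_neq : Ordinal w_lt10 != inord (ex_parent w).
  apply/eqP => /(congr1 val); rewrite /= inordK; last first.
    exact: leq_trans (ex_parent_lt4 w) _.
  by move=> w_eq; move: (ex_parent_lt4 w); rewrite -w_eq ltnNge w_gt3.
have [l lF ends_l] :=
  feasible_leaf_link feasF parent_neq (@ex_leaf_parent (Ordinal w_lt10) w_gt3).
apply/hasP; exists (val l); first by rewrite mem_iota /=.
by rewrite inord_val lF -ex_ends1E -ex_ends2E.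
Qed.

Lemma ex_feasible_card (F : {set 'I_6}) :
  feasible ex_tr ex_ends F -> (4 <= #|F|)%N.
Proof.
move=> feasF; rewrite (@card_ord_count _ _ (fun l => inord l \in F)); last first.
  by move=> l; rewrite inord_val.
have := ex_leaf_covered feasF (isT : 3 < 4 < 10)%N.
have := ex_leaf_covered feasF (isT : 3 < 5 < 10)%N.
have := ex_leaf_covered feasF (isT : 3 < 6 < 10)%N.
have := ex_leaf_covered feasF (isT : 3 < 7 < 10)%N.
have := ex_leaf_covered feasF (isT : 3 < 8 < 10)%N.
have := ex_leaf_covered feasF (isT : 3 < 9 < 10)%N.
rewrite /=.
by case: (inord 0 \in F); case: (inord 1 \in F); case: (inord 2 \in F);
  case: (inord 3 \in F); case: (inord 4 \in F); case: (inord 5 \in F).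
Qed.

Definition ex_F0_links : seq nat := [:: 0; 1; 3; 4].

Definition ex_F0 : {set 'I_6} := [set l : 'I_6 | val l \in ex_F0_links].

Definition F0_adj (a b : nat) : bool :=
  has (fun l => ((link_end1 l, link_end2 l) == (a, b))
             || ((link_end1 l, link_end2 l) == (b, a))) ex_F0_links.

Definition F0_adj_avoiding (u a b : nat) : bool :=
  [&& a != u, b != u & tree_adj a b || F0_adj a b].

(* [u = 10] removes no vertex. *)
Definition ex_F0_check : bool :=
  all (fun u => all (fun x => (x == u) ||
    let r := reach 10 (F0_adj_avoiding u) 10 x in
    all (fun y => (y == u) || (y \in r)) (iota 0 10))
  (iota 0 10)) (iota 0 11).

Lemma ex_F0_checkT : ex_F0_check.
Proof. by vm_compute. Qed.

Lemma F0_adj_link (a b : 'I_10) : F0_adj a b -> link_rel ex_ends ex_F0 a b.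
Proof.
case/hasP=> l l_F0 ends_l.
have l_lt6 : (l < 6)%N by move: l_F0; rewrite !inE => /or4P[] /eqP->.
apply/existsP; exists (Ordinal l_lt6); rewrite inE l_F0.
by rewrite -!val_eqE !ex_ends1E !ex_ends2E -!xpair_eqE.
Qed.

Lemma ex_F0_connected (u : nat) (S : {set 'I_10}) :
  (u <= 10)%N -> (forall a : 'I_10, (a \in S) = (val a != u)) ->
  connected_on (fun a b => ex_tr a b || link_rel ex_ends ex_F0 a b) S.
Proof.
move=> u_le10 memS.
apply: (connected_on_reach (p := fun a => a != u) (R := F0_adj_avoiding u)) => //.
  move=> a b /and3P[a_u b_u /orP[tr_ab | /F0_adj_link link_ab]];
    by rewrite /restrict !memS a_u b_u ?ex_trE ?tr_ab ?link_ab ?orbT.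
move=> x y x_u y_u; have /allP/(_ u) := ex_F0_checkT.
rewrite mem_iota ltnS u_le10 => /(_ isT)/allP/(_ _ (ord_in_iota x)).
rewrite (negbTE x_u) orFb => /allP/(_ _ (ord_in_iota y)).
by rewrite (negbTE y_u) orFb.
Qed.

Lemma ex_feasible_F0 : feasible ex_tr ex_ends ex_F0.
Proof.
split; first by rewrite card_ord.
  by apply: (@ex_F0_connected 10) => // a; rewrite inE (ltn_eqF (ltn_ord a)).
by move=> u; apply: (@ex_F0_connected u); [apply: ltnW | move=> a; rewrite !inE andbT].
Qed.

Local Open Scope ring_scope.

Lemma ex_F0_cost : link_cost ex_cost ex_F0 = 4.
Proof.
rewrite /link_cost /ex_cost sumr_const (@card_ord_count _ _ (mem ex_F0_links)) //.
by move=> l; rewrite inE.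
Qed.

(* The three components of [T - u] for [u] = r (0) and [u] = v_i (1, 2, 3):
   [comp_label u x] numbers the component of [x], whose representative is
   [comp_rep u (comp_label u x)]. *)
Definition comp_label (u x : nat) : nat :=
  if u == 0%N then (x.-1 %% 3)%N
  else if x == (u + 3)%N then 1%N else if x == (u + 6)%N then 2%N else 0%N.

Definition comp_rep (u i : nat) : nat :=
  if u == 0%N then i.+1 else nth 0%N [:: 0; u + 3; u + 6]%N i.

Lemma comp_label_lt3 u x : (comp_label u x < 3)%N.
Proof.
by rewrite /comp_label; case: ifP => _; [apply: ltn_pmod | repeat case: ifP].
Qed.

Definition tree_adj_avoiding (u a b : nat) : bool := [&& a != u, b != u & tree_adj a b].

Definition ex_components_check : bool :=
  all (fun u => all (fun x =>
    (x == u) || (comp_rep u (comp_label u x) \in reach 10 (tree_adj_avoiding u) 10 x))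
  (iota 0 10)) (iota 0 4).

Lemma ex_components_checkT : ex_components_check.
Proof. by vm_compute. Qed.

Lemma ex_component_connect (u x : 'I_10) : (u < 4)%N -> x != u ->
  connect (restrict ex_tr (setT :\ u)) x (inord (comp_rep u (comp_label u x))).
Proof.
move=> u_lt4 x_u; have /allP/(_ u) := ex_components_checkT.
rewrite mem_iota u_lt4 => /(_ isT)/allP/(_ _ (ord_in_iota x)).
have tree_sub (a b : 'I_10) : tree_adj_avoiding u a b -> restrict ex_tr (setT :\ u) a b.
  by rewrite /restrict !inE !andbT.
rewrite (negbTE (x_u : val x != val u)) orFb => /(reachP tree_sub)[y <-].
by rewrite inord_val.
Qed.

Definition crossing_count (T : eqType) (u : nat) (g : nat -> T) : nat :=
  count (fun l => g (comp_label u (link_end1 l)) != g (comp_label u (link_end2 l)))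
    (iota 0 6).

(* The row of (P) at [u] for blocks labelled [g] on the components, scaled by
   2 since every link has weight 1/2. *)
Definition lp_row_ok (T : eqType) (u : nat) (g : nat -> T) : bool :=
  (2 * size (undup (map g (iota 0 3))) <= 2 + crossing_count u g)%N.

Definition ex_lp_rows_check : bool :=
  all (fun u => all (fun a => all (fun b => all (fun c =>
    lp_row_ok u (nth 0%N [:: a; b; c]))
  (iota 0 3)) (iota 0 3)) (iota 0 3)) (iota 0 4).

Lemma ex_lp_rows_checkT : ex_lp_rows_check.
Proof. by vm_compute. Qed.

Lemma lp_row_ok_kernel (T1 T2 : eqType) (u : nat) (g : nat -> T1) (h : nat -> T2) :
  {in iota 0 3 &, forall i j, (g i == g j) = (h i == h j)} ->
  lp_row_ok u g = lp_row_ok u h.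
Proof.
move=> kernel_eq; rewrite /lp_row_ok /crossing_count (size_undup_map_kernel kernel_eq).
congr (_ <= 2 + _)%N; apply: eq_count => l.
by rewrite kernel_eq ?mem_iota ?comp_label_lt3.
Qed.

Lemma lp_row_ok_all (T : eqType) (u : nat) (g : nat -> T) : (u < 4)%N -> lp_row_ok u g.
Proof.
move=> u_lt4; set s := map g (iota 0 3).
pose label i := index (g i) s.
have g_in_s i : (i < 3)%N -> g i \in s by move=> i_lt3; rewrite map_f ?mem_iota.
have label_lt3 i : (i < 3)%N -> label i \in iota 0 3.
  by move=> i_lt3; rewrite mem_iota /= -[3%N]/(size s) index_mem g_in_s.
rewrite (@lp_row_ok_kernel _ _ _ _ (nth 0%N [:: label 0; label 1; label 2]%N)).
  have /allP/(_ u) := ex_lp_rows_checkT; rewrite mem_iota u_lt4 => /(_ isT).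
  move=> /allP/(_ _ (label_lt3 0%N isT))/allP/(_ _ (label_lt3 1%N isT)).
  by move=> /allP/(_ _ (label_lt3 2%N isT)).
move=> i j; rewrite !mem_iota /= => i_lt3 j_lt3.
have -> : nth 0%N [:: label 0; label 1; label 2]%N i = label i.
  by move: i_lt3; case: i => [|[|[|]]].
have -> : nth 0%N [:: label 0; label 1; label 2]%N j = label j.
  by move: j_lt3; case: j => [|[|[|]]].
apply/eqP/eqP => [g_ij | label_ij]; first by rewrite /label g_ij.
rewrite -(nth_index (g 0%N) (g_in_s i i_lt3)).
by rewrite -(nth_index (g 0%N) (g_in_s j j_lt3)) -/(label i) label_ij.
Qed.

Lemma ex_partLP_row (u : 'I_10) (P : {set {set 'I_10}}) :
  nonleaf ex_tr u -> in_Pi ex_tr u P ->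
  #|P|%:R - 1 <= \sum_(l | crosses ex_ends u P l) ex_xhat l.
Proof.
move=> /ex_nonleaf_lt4 u_lt4 P_Pi.
pose g i := pblock P (inord (comp_rep u i) : 'I_10).
have pblockE x : x != u -> pblock P x = g (comp_label u x).
  move=> x_u; have x_comp := ex_component_connect u_lt4 x_u.
  by rewrite /g (in_Pi_pblock_connect P_Pi x_u x_comp).
have card_le : (#|P| <= size (undup (map g (iota 0 3))))%N.
  rewrite (_ : map g _ = map (pblock P) [seq inord (comp_rep u i) | i <- iota 0 3]);
    last by rewrite -map_comp.
  apply: (in_Pi_card_le P_Pi) => x x_u.
  exists (inord (comp_rep u (comp_label u x))); last exact: pblockE.
  by apply: (map_f (fun i => inord (comp_rep u i))); rewrite mem_iota comp_label_lt3.
have ends_neq_u (l : 'I_6) : ((ex_ends l).1 != u) && ((ex_ends l).2 != u).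
  by rewrite -!val_eqE ex_ends1E ex_ends2E; case: l => -[|[|[|[|[|[|]]]]]] //=;
    case: (nat_of_ord u) u_lt4 => [|[|[|[|]]]].
have crossE (l : 'I_6) : crosses ex_ends u P l =
    (g (comp_label u (link_end1 l)) != g (comp_label u (link_end2 l))).
  have /andP[end1_u end2_u] := ends_neq_u l.
  by rewrite /crosses end1_u end2_u !pblockE // -ex_ends1E -ex_ends2E.
rewrite (eq_bigl _ _ crossE) -(big_mkord (fun l => g (comp_label u (link_end1 l))
  != g (comp_label u (link_end2 l))) (fun _ => 1 / 2)) big_const_seq iter_addr_0.
rewrite -[count _ _]/(crossing_count u g) -mulr_natr.
have := lp_row_ok_all g u_lt4; move: card_le; rewrite /lp_row_ok.
rewrite -(ler_nat rat) -(ler_nat rat) natrD natrM.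
lra.
Qed.

Lemma ex_feasible_cost (F : {set 'I_6}) :
  feasible ex_tr ex_ends F -> 4 <= link_cost ex_cost F.
Proof.
by move=> /ex_feasible_card; rewrite /link_cost /ex_cost sumr_const ler_nat.
Qed.

Lemma ex_partLP_feasible : partLP_feasible ex_tr ex_ends ex_xhat.
Proof.
split; last exact: ex_partLP_row.
by move=> l; rewrite /ex_xhat; lra.
Qed.

Lemma ex_xhat_cost : LP_cost ex_cost ex_xhat = 3.
Proof.
by rewrite /LP_cost /ex_cost /ex_xhat sumr_const card_ord mul1r -mulr_natr; lra.
Qed.

Theorem mainTheorem7 :
  [/\ (forall F : {set 'I_6}, feasible ex_tr ex_ends F -> 4 <= link_cost ex_cost F),
      (exists F : {set 'I_6}, feasible ex_tr ex_ends F /\ link_cost ex_cost F = 4),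
      partLP_feasible ex_tr ex_ends ex_xhat,
      LP_cost ex_cost ex_xhat = 3 &
      (forall F : {set 'I_6}, feasible ex_tr ex_ends F ->
         4 / 3 <= link_cost ex_cost F / LP_cost ex_cost ex_xhat)].
Proof.
split.
- exact: ex_feasible_cost.
- by exists ex_F0; split; [exact: ex_feasible_F0 | exact: ex_F0_cost].
- exact: ex_partLP_feasible.
- exact: ex_xhat_cost.
move=> F /ex_feasible_cost cost_ge4; rewrite ex_xhat_cost; lra.
Qed.
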